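(* Let $n\ge2$ and let $u=x_0+h_1x_1+\cdots+h_{n-1}x_{n-1}$ be a polar $n$-complex number with $v_+>0$, with $v_->0$ if $n$ is even, and with $\rho_k>0$ for all $k=1,\dots,\lfloor(n-1)/2\rfloor$. Then $$u=\exp\Big[e_+\ln v_++e_-\ln v_-+\sum_{k=1}^{n/2-1}\big(e_k\ln\rho_k+\tilde e_k\phi_k\big)\Big]\quad(n\text{ even}),$$ $$u=\exp\Big[e_+\ln v_++\sum_{k=1}^{(n-1)/2}\big(e_k\ln\rho_k+\tilde e_k\phi_k\big)\Big]\quad(n\text{ odd}),$$ where $\exp w=\sum_{j\ge0}w^j/j!$. Equivalently, $u=\big(e_+v_++e_-v_-+\sum_{k}e_k\rho_k\big)\exp\big(\sum_k\tilde e_k\phi_k\big)$ (the $e_-$ term present only for even $n$).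
   Context: Polar $n$-complex numbers: $u=x_0+h_1x_1+\cdots+h_{n-1}x_{n-1}$, $x_j\in\mathbb{R}$, $h_0=1$, with componentwise addition and bilinear multiplication $h_jh_k=h_{(j+k)\bmod n}$. Canonical variables: $v_+=\sum_px_p$; for even $n$, $v_-=\sum_p(-1)^px_p$; for $k=1,\dots,\lfloor(n-1)/2\rfloor$, $v_k=\sum_px_p\cos(2\pi kp/n)$, $\tilde v_k=\sum_px_p\sin(2\pi kp/n)$, $\rho_k=\sqrt{v_k^2+\tilde v_k^2}$, and (for $\rho_k>0$) $\phi_k\in[0,2\pi)$ with $\cos\phi_k=v_k/\rho_k$, $\sin\phi_k=\tilde v_k/\rho_k$. Canonical base: $e_+=\frac1n\sum_{p=0}^{n-1}h_p$; for even $n$, $e_-=\frac1n\sum_{p=0}^{n-1}(-1)^ph_p$; $e_k=\frac2n\sum_{p=0}^{n-1}\cos(2\pi kp/n)h_p$, $\tilde e_k=\frac2n\sum_{p=0}^{n-1}\sin(2\pi kp/n)h_p$ for $k=1,\dots,\lfloor(n-1)/2\rfloor$. *)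

From HB Require Import structures.
From mathcomp Require Import all_boot all_order all_algebra.
From mathcomp Require Import all_classical all_reals all_analysis.
Set Implicit Arguments. Unset Strict Implicit. Unset Printing Implicit Defensive.
Import Order.TTheory GRing.Theory Num.Theory.
Import numFieldNormedType.Exports.
Local Open Scope ring_scope.
Local Open Scope classical_set_scope.

(* A polar n-complex number x_0 + h_1 x_1 + ... + h_{n-1} x_{n-1} is
   represented by its component function p |-> x_p on 'I_n. *)
Definition ncplx (R : realType) (n : nat) := 'I_n -> R.

Section PolarNComplex.
Variables (R : realType) (n : nat).

Definition ncadd (u v : ncplx R n) : ncplx R n := fun p => u p + v p.
Definition ncscale (a : R) (u : ncplx R n) : ncplx R n := fun p => a * u p.
Definition nczero : ncplx R n := fun _ => 0.
Definition ncone : ncplx R n := fun p => if val p == 0%N then 1 else 0.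
(* bilinear multiplication with h_j h_k = h_{(j+k) mod n} *)
Definition ncmul (u v : ncplx R n) : ncplx R n :=
  fun m => \sum_(j < n) \sum_(k < n | ((j + k) %% n)%N == val m) u j * v k.
Definition ncpow (w : ncplx R n) (j : nat) : ncplx R n := iter j (ncmul w) ncone.
Definition ncsum (I : Type) (r : seq I) (F : I -> ncplx R n) : ncplx R n :=
  foldr (fun i acc => ncadd (F i) acc) nczero r.

(* "exp w = E": the series sum_j w^j / j! converges (componentwise) to E *)
Definition ncexp_is (w E : ncplx R n) : Prop :=
  forall p : 'I_n,
    (fun N : nat => \sum_(j < N) ncpow w j p / (j`!)%:R) @ \oo --> E p.

Definition angle (k p : nat) : R := 2 * pi * k%:R * p%:R / n%:R.

Definition vplus (u : ncplx R n) : R := \sum_(p < n) u p.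
Definition vminus (u : ncplx R n) : R := \sum_(p < n) (-1) ^+ p * u p.
Definition vk (u : ncplx R n) (k : nat) : R := \sum_(p < n) u p * cos (angle k p).
Definition vtk (u : ncplx R n) (k : nat) : R := \sum_(p < n) u p * sin (angle k p).
Definition rhok (u : ncplx R n) (k : nat) : R := Num.sqrt (vk u k ^+ 2 + vtk u k ^+ 2).

Definition eplus : ncplx R n := fun p => 1 / n%:R.
Definition eminus : ncplx R n := fun p => (-1) ^+ p / n%:R.
Definition ek (k : nat) : ncplx R n := fun p => 2 / n%:R * cos (angle k p).
Definition etk (k : nat) : ncplx R n := fun p => 2 / n%:R * sin (angle k p).

(* k ranges over 1, ..., floor((n-1)/2)  (= n/2 - 1 for n even) *)
Definition krange : seq nat := iota 1 (n.-1)./2.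

Definition log_exponent (u : ncplx R n) (phi : nat -> R) : ncplx R n :=
  ncadd (ncscale (ln (vplus u)) eplus)
   (ncadd (if odd n then nczero else ncscale (ln (vminus u)) eminus)
     (ncsum krange (fun k => ncadd (ncscale (ln (rhok u k)) (ek k))
                                   (ncscale (phi k) (etk k))))).

Definition modulus_part (u : ncplx R n) : ncplx R n :=
  ncadd (ncscale (vplus u) eplus)
   (ncadd (if odd n then nczero else ncscale (vminus u) eminus)
     (ncsum krange (fun k => ncscale (rhok u k) (ek k)))).

Definition angle_exponent (phi : nat -> R) : ncplx R n :=
  ncsum krange (fun k => ncscale (phi k) (etk k)).

End PolarNComplex.

From HB Require Import structures.
From mathcomp Require Import all_boot all_order all_algebra.
From mathcomp Require Import all_classical all_reals all_analysis.
From mathcomp Require Import complex ring lra zify.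
Import Order.TTheory GRing.Theory Num.Theory.
Import numFieldNormedType.Exports.
Set Implicit Arguments. Unset Strict Implicit. Unset Printing Implicit Defensive.
Local Open Scope ring_scope.
Local Open Scope complex_scope.
Local Open Scope classical_set_scope.

(* The discrete Fourier transform [dft k u = \sum_p u_p omega^(k p)], with
   [omega = e^(2 i pi / n)], is additive, multiplicative and injective on polar
   n-complex numbers; as u is real, [dft (n - k) u] is the conjugate of [dft k u],
   so the frequencies k <= n/2 already determine u.  On these frequencies it maps
   e_+, e_- and e_l, etilde_l to the indicators of 0, of n/2 and of l (times 1 or i),
   and u itself to v_+, v_- and rho_k e^(i phi_k).  It also maps the partial sums
   of the exponential series of w to those of the complex exponential series of
   [dft k w], so exp w exists and has coefficients e^(dft k w).  Both identities
   thus reduce, frequency by frequency, to e^(ln v) = v and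
   e^(ln rho + i phi) = rho e^(i phi). *)

Section ComplexExponential.
Variable R : realType.
Local Notation C := R[i].
Implicit Types (x y : R) (z w : C).

Lemma complex_ext z w :
  complex.Re z = complex.Re w -> complex.Im z = complex.Im w -> z = w.
Proof. by case: z => a b; case: w => c d /= -> ->. Qed.

Lemma complex_Re_sum I (r : seq I) (P : pred I) (f : I -> C) :
  complex.Re (\sum_(i <- r | P i) f i) = \sum_(i <- r | P i) complex.Re (f i).
Proof. by apply: big_morph => // - [? ?] [? ?]. Qed.

Lemma complex_Im_sum I (r : seq I) (P : pred I) (f : I -> C) :
  complex.Im (\sum_(i <- r | P i) f i) = \sum_(i <- r | P i) complex.Im (f i).
Proof. by apply: big_morph => // - [? ?] [? ?]. Qed.

Lemma complex_ReM z w :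
  complex.Re (z * w) = complex.Re z * complex.Re w - complex.Im z * complex.Im w.
Proof. by case: z; case: w. Qed.

Lemma complex_ImM z w :
  complex.Im (z * w) = complex.Re z * complex.Im w + complex.Im z * complex.Re w.
Proof. by case: z; case: w. Qed.

Definition expi x : C := cos x +i* sin x.

Lemma expiD x y : expi (x + y) = expi x * expi y.
Proof. by apply: complex_ext; rewrite ?complex_ReM ?complex_ImM /= ?cosD ?sinD; ring. Qed.

Lemma expi0 : expi 0 = 1.
Proof. by rewrite /expi cos0 sin0. Qed.

Lemma expiMn x m : expi x ^+ m = expi (m%:R * x).
Proof.
elim: m => [|m IH]; first by rewrite mul0r expi0.
by rewrite exprS IH -expiD -natr1 mulrDl mul1r addrC.
Qed.

Lemma conjc_expi x : (expi x)^* = expi (- x).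
Proof. by rewrite /expi cosN sinN. Qed.

Lemma expi2pi : expi (pi *+ 2) = 1.
Proof. by rewrite /expi cos2pi sin2pi. Qed.

Lemma expi_neq1 x : 0 < x < pi *+ 2 -> expi x != 1.
Proof.
move=> /andP[x_gt0 x_lt2pi]; apply/negP => /eqP/(congr1 (@complex.Re R)) /=.
have -> : x = (x / 2) *+ 2 by rewrite -mulr_natr divfK.
rewrite cos_mulr2n cos2sin2 => cos_eq1.
have /eqP : sin (x / 2) ^+ 2 = 0 by lra.
rewrite sqrf_eq0 gt_eqF //; apply: sin_gt0_pi.
by rewrite divr_gt0 //= ltr_pdivrMr // mulr_natr.
Qed.

Definition cexp z : C := (expR (complex.Re z))%:C * expi (complex.Im z).

Lemma cexp_real (a : R) : cexp a%:C = (expR a)%:C.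
Proof. by rewrite /cexp /= expi0 mulr1. Qed.

Lemma cexp0 : cexp (0 : C) = 1.
Proof. by rewrite /cexp /= expR0 expi0 mulr1. Qed.

Lemma cexp_polar (a b : R) : cexp (a%:C + b%:C * 'i) = (expR a)%:C * expi b.
Proof. by rewrite /cexp /= !(mulr0, mulr1, subr0, addr0, add0r). Qed.

Lemma cexp_i (b : R) : cexp (b%:C * 'i) = expi b.
Proof. by rewrite /cexp /= !(mulr0, mulr1, subr0, addr0, add0r) oppr0 expR0 mul1r. Qed.

End ComplexExponential.

Lemma sum_antidiagonal (V : nmodType) (F : nat -> nat -> V) N :
  \sum_(m < N) \sum_(j < m.+1) F j (m - j)%N =
  \sum_(j < N) \sum_(k < N | (j + k < N)%N) F j k.
Proof.
under eq_bigr => m _ do rewrite (big_ord_widen_cond N xpredT (fun j => F j (m - j)%N)) //.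
rewrite (exchange_big_dep xpredT) //=; apply: eq_bigr => j _.
rewrite -(@big_geq_mkord _ _ _ j N xpredT (fun m => F j (m - j)%N)) -{1}(add0n j) big_addn.
rewrite big_mkord (big_ord_widen N (fun i => F j (i + j - j)%N)) ?leq_subr //.
by apply: eq_big => [i|i _]; rewrite ?ltn_subRL // addnK.
Qed.

Section ExponentialSeries.
Variable K : numFieldType.
Implicit Types x y : K.

Definition exp_series x N : K := \sum_(j < N) x ^+ j / (j`!)%:R.

Definition exp_cauchy_tail x y N : K :=
  \sum_(j < N) \sum_(k < N | (N <= j + k)%N) x ^+ j * y ^+ k / ((j`!)%:R * (k`!)%:R).

Lemma exp_seriesM x y N :
  exp_series x N * exp_series y N = exp_series (x + y) N + exp_cauchy_tail x y N.
Proof.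
have fact_neq0 m : (m`!%:R : K) != 0 by rewrite pnatr_eq0 -lt0n fact_gt0.
pose F j k := x ^+ j * y ^+ k / ((j`!)%:R * (k`!)%:R).
have -> : exp_series (x + y) N = \sum_(j < N) \sum_(k < N | (j + k < N)%N) F j k.
  rewrite -sum_antidiagonal; apply: eq_bigr => m _.
  rewrite addrC exprDn mulr_suml; apply: eq_bigr => i _.
  have le_im : (i <= m)%N by rewrite -ltnS.
  rewrite /F -(bin_fact le_im) -mulr_natr !natrM.
  have := fact_neq0 i; have := fact_neq0 (m - i)%N.
  have : ('C(m, i)%:R : K) != 0 by rewrite pnatr_eq0 -lt0n bin_gt0.
  move: ('C(m, i)%:R) (i`!%:R) ((m - i)`!%:R) (x ^+ i) (y ^+ (m - i)) => c a b p q *.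
  by field; apply/and3P.
rewrite /exp_series mulr_suml /exp_cauchy_tail -big_split; apply: eq_bigr => j _ /=.
rewrite mulr_sumr (bigID (fun k : 'I_N => (j + k < N)%N)) /=; congr (_ + _).
  by apply: eq_bigr => k _; rewrite /F invfM; ring.
by apply: eq_big => [k|k _]; [rewrite -leqNgt | rewrite /F invfM; ring].
Qed.

Lemma ler_norm_exp_cauchy_tail x y N :
  `|exp_cauchy_tail x y N| <= exp_cauchy_tail `|x| `|y| N.
Proof.
rewrite (le_trans (ler_norm_sum _ _ _)) // ler_sum // => j _.
rewrite (le_trans (ler_norm_sum _ _ _)) // ler_sum // => k _.
by rewrite normrM normfV !normrM !normrX !normr_nat.
Qed.

End ExponentialSeries.

Lemma rmorph_exp_series (K L : numFieldType) (f : {rmorphism K -> L}) x N :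
  f (exp_series x N) = exp_series (f x) N.
Proof.
by rewrite rmorph_sum; apply: eq_bigr => j _; rewrite fmorph_div rmorphXn rmorph_nat.
Qed.

Lemma rmorph_exp_cauchy_tail (K L : numFieldType) (f : {rmorphism K -> L}) x y N :
  f (exp_cauchy_tail x y N) = exp_cauchy_tail (f x) (f y) N.
Proof.
rewrite rmorph_sum; apply: eq_bigr => j _; rewrite rmorph_sum; apply: eq_bigr => k _.
by rewrite fmorph_div !rmorphM !rmorphXn !rmorph_nat.
Qed.

Section RealExponentialSeries.
Variable R : realType.

Lemma cvg_exp_series (a : R) : exp_series a @ \oo --> expR a.
Proof.
have -> : exp_series a = series (exp_coeff a).
  by apply/funext => N; rewrite /series /= big_mkord.
exact: is_cvg_series_exp_coeff.
Qed.

Lemma cvg_exp_cauchy_tail (a b : R) : exp_cauchy_tail a b @ \oo --> 0.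
Proof.
have -> : exp_cauchy_tail a b =
    (fun N => exp_series a N * exp_series b N - exp_series (a + b) N).
  by apply/funext => N; rewrite exp_seriesM addrC addKr.
rewrite -(subrr (expR (a + b))) {1}expRD.
by apply: cvgB; [apply: cvgM|]; exact: cvg_exp_series.
Qed.

End RealExponentialSeries.

Section ComplexConvergence.
Variable R : realType.
Local Notation C := R[i].
Implicit Types (f g : nat -> C) (z w : C).

Definition cvgc f z :=
  (fun N => complex.Re (f N)) @ \oo --> complex.Re z /\
  (fun N => complex.Im (f N)) @ \oo --> complex.Im z.

Lemma cvgc_real (f : nat -> R) (a : R) : f @ \oo --> a -> cvgc (fun N => (f N)%:C) a%:C.
Proof. by split => //=; exact: cvg_cst. Qed.

Lemma cvgcB f g z w : cvgc f z -> cvgc g w -> cvgc (fun N => f N - g N) (z - w).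
Proof.
have ReB x y : complex.Re (x - y) = complex.Re x - complex.Re y by case: x; case: y.
have ImB x y : complex.Im (x - y) = complex.Im x - complex.Im y by case: x; case: y.
move=> [fRe fIm] [gRe gIm]; split.
  by under eq_cvg do rewrite ReB; rewrite ReB; apply: cvgB.
by under eq_cvg do rewrite ImB; rewrite ImB; apply: cvgB.
Qed.

Lemma cvgcM f g z w : cvgc f z -> cvgc g w -> cvgc (fun N => f N * g N) (z * w).
Proof.
move=> [fRe fIm] [gRe gIm]; split.
  under eq_cvg do rewrite complex_ReM.
  by rewrite complex_ReM; apply: cvgB; apply: cvgM.
under eq_cvg do rewrite complex_ImM.
by rewrite complex_ImM; apply: cvgD; apply: cvgM.
Qed.

Lemma cvgc_cst z : cvgc (fun _ => z) z.
Proof. by split; exact: cvg_cst. Qed.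

Lemma cvgc_sum m (F : 'I_m -> nat -> C) (L : 'I_m -> C) :
  (forall k, cvgc (F k) (L k)) -> cvgc (fun N => \sum_(k < m) F k N) (\sum_(k < m) L k).
Proof.
move=> FL; split; under eq_cvg do rewrite ?complex_Re_sum ?complex_Im_sum;
  rewrite ?complex_Re_sum ?complex_Im_sum;
  by apply: cvg_big => [|k _]; [exact: add_continuous | case: (FL k)].
Qed.

Lemma cvgc_unique f z w : cvgc f z -> cvgc f w -> z = w.
Proof.
move=> [fz1 fz2] [fw1 fw2].
by apply: complex_ext; [apply: cvg_unique fz1 fw1 | apply: cvg_unique fz2 fw2].
Qed.

End ComplexConvergence.

Section ComplexExponentialSeries.
Variable R : realType.
Local Notation C := R[i].

Lemma exp_series_i_coeff (b : R) j :
  (b%:C * 'i) ^+ j / (j`!)%:R = cos_coeff b j +i* sin_coeff b j.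
Proof.
rewrite exprMn.
have -> : ('i : C) ^+ j = (if odd j then 'i else 1) * ((-1) ^+ j./2 : R)%:C.
  rewrite -{1}(odd_double_half j) exprD -muln2 mulnC exprM sqr_i rmorphXn rmorphN1.
  by case: (odd j); rewrite ?expr1 ?expr0.
rewrite /cos_coeff /sin_coeff /= -!rmorphXn.
have half_pred_odd : odd j -> j.-1./2 = j./2.
  by move=> odd_j; rewrite -{1}(odd_double_half j) odd_j add1n /= doubleK.
rewrite -(rmorph_nat (real_complex R)) -fmorphV -exprnP.
case: (boolP (odd j)) => [odd_j|_]; first rewrite half_pred_odd //.
all: by apply: complex_ext; rewrite !(complex_ReM, complex_ImM) /=; ring.
Qed.

Lemma cvgc_exp_series_i (b : R) : cvgc (exp_series (b%:C * 'i)) (expi b).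
Proof.
split.
  have -> : (fun N => complex.Re (exp_series (b%:C * 'i) N)) = series (cos_coeff b).
    apply/funext => N; rewrite /exp_series complex_Re_sum /series /= big_mkord.
    by apply: eq_bigr => j _; rewrite exp_series_i_coeff.
  by rewrite /= unlock; exact: is_cvg_series_cos_coeff.
have -> : (fun N => complex.Im (exp_series (b%:C * 'i) N)) = series (sin_coeff b).
  apply/funext => N; rewrite /exp_series complex_Im_sum /series /= big_mkord.
  by apply: eq_bigr => j _; rewrite exp_series_i_coeff.
by rewrite /= unlock; exact: is_cvg_series_sin_coeff.
Qed.

Lemma cvgc_to0 (f : nat -> C) (g : nat -> R) :
  (forall N, `|f N| <= (g N)%:C) -> g @ \oo --> 0 -> cvgc f 0.
Proof.
have squeeze (h : nat -> R) : (forall N, `|h N| <= g N) -> g @ \oo --> 0 -> h @ \oo --> 0.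
  move=> hg g0; apply: (@squeeze_cvgr _ _ _ _ (fun N => - g N) g) => //.
    by apply: nearW => N; rewrite -ler_norml.
  by rewrite -oppr0; apply: cvgN.
move=> fg g0; split; apply: squeeze g0 => N.
  by rewrite -lecR (le_trans (normc_ge_Re _)).
rewrite -normrN -ReiNIm -lecR (le_trans (normc_ge_Re _)) //.
by rewrite normrM complexiE normCi mulr1.
Qed.

(* Up to the tail of the Cauchy product, the partial sums of e^(a + ib) are those
   of e^a times those of e^(ib); that tail is dominated by the one for |a| and |b|,
   which tends to e^|a| e^|b| - e^(|a| + |b|) = 0. *)
Lemma cvgc_exp_series (z : C) : cvgc (exp_series z) (cexp z).
Proof.
case: z => a b; rewrite /cexp /= -[_ * expi b]subr0.
have -> : exp_series (a +i* b) = (fun N =>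
    (exp_series a N)%:C * exp_series (b%:C * 'i) N - exp_cauchy_tail a%:C (b%:C * 'i) N).
  apply/funext => N; rewrite rmorph_exp_series exp_seriesM addrK.
  by congr exp_series; apply: complex_ext; rewrite /= ?complex_ReM ?complex_ImM /=; ring.
apply: cvgcB.
  by apply: cvgcM; [apply: cvgc_real; exact: cvg_exp_series | exact: cvgc_exp_series_i].
apply: (cvgc_to0 _ (cvg_exp_cauchy_tail `|a| `|b|)) => N.
have norm_real (x : R) : `|x%:C| = `|x|%:C.
  by rewrite normc_def /= expr0n addr0 sqrtr_sqr.
rewrite (le_trans (ler_norm_exp_cauchy_tail _ _ _)) // rmorph_exp_cauchy_tail.
by rewrite normrM normCi mulr1 !norm_real.
Qed.

End ComplexExponentialSeries.

Lemma dvdn_add_subn n q p : (q < n)%N -> (p < n)%N -> (n %| q + (n - p))%N = (q == p).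
Proof.
move=> lt_qn lt_pn; have [->|neq_qp] := eqVneq q p; first by rewrite subnKC ?dvdnn // ltnW.
apply: negbTE; case: (ltngtP q p) => [lt_qp|lt_pq|eq_qp]; last by rewrite eq_qp eqxx in neq_qp.
  by rewrite gtnNdvd //; lia.
by rewrite (_ : q + (n - p) = q - p + n)%N ?(dvdn_addl _ (dvdnn n)) ?gtnNdvd //; lia.
Qed.

Section DiscreteFourierTransform.
Variables (R : realType) (n : nat).
Hypothesis n_gt0 : (0 < n)%N.
Local Notation C := R[i].

Definition omega : C := expi (2 * pi / n%:R).

Let n_neq0 : (n%:R : R) != 0. Proof. by rewrite pnatr_eq0 -lt0n. Qed.

Lemma omegaX m : omega ^+ m = expi (2 * pi * m%:R / n%:R).
Proof. by rewrite expiMn; congr expi; rewrite mulrCA mulrA. Qed.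

Lemma omegaX_angle k p : omega ^+ (k * p) = expi (angle R n k p).
Proof. by rewrite omegaX /angle natrM mulrA. Qed.

Lemma omegaXn : omega ^+ n = 1.
Proof. by rewrite omegaX mulfK // -expi2pi mulr_natl. Qed.

Lemma omegaX_neq1 m : (0 < m < n)%N -> omega ^+ m != 1.
Proof.
move=> /andP[m_gt0 m_lt_n]; rewrite omegaX; apply: expi_neq1.
have n_pos : (0 : R) < n%:R by rewrite ltr0n.
have := @pi_gt0 R; have : (m%:R : R) < n%:R by rewrite ltr_nat.
have : (0 : R) < m%:R by rewrite ltr0n.
move=> *; rewrite divr_gt0 ?mulr_gt0 //= ltr_pdivrMr //; nra.
Qed.

Lemma omegaX_mod m : omega ^+ (m %% n) = omega ^+ m.
Proof. by rewrite expr_mod // omegaXn. Qed.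

Lemma sum_omegaX m :
  \sum_(p < n) omega ^+ (m * p) = if (n %| m)%N then n%:R else 0.
Proof.
case: ifP => [/dvdnP[q ->]|n_ndvd_m].
  under eq_bigr do rewrite -mulnA mulnC exprM exprM omegaXn !expr1n.
  by rewrite sumr_const card_ord.
have omegam_neq1 : omega ^+ m != 1.
  rewrite -omegaX_mod omegaX_neq1 // ltn_pmod // andbT lt0n.
  by move: n_ndvd_m; rewrite /dvdn => ->.
have : (omega ^+ m - 1) * \sum_(p < n) omega ^+ (m * p) = 0.
  under eq_bigr do rewrite exprM.
  by rewrite -subrX1 -exprM mulnC exprM omegaXn expr1n subrr.
by move/eqP; rewrite mulf_eq0 subr_eq0 (negbTE omegam_neq1) => /eqP.
Qed.

Lemma conjc_omegaX l p : (l <= n)%N -> (omega ^+ (l * p))^*%C = omega ^+ ((n - l) * p).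
Proof.
move=> le_ln.
have inv : omega ^+ ((n - l) * p) * omega ^+ (l * p) = 1.
  by rewrite -exprD -mulnDl subnK // exprM omegaXn expr1n.
have conj_inv m : (omega ^+ m)^*%C * omega ^+ m = 1.
  by rewrite omegaX conjc_expi -expiD addNr expi0.
by rewrite -[LHS]mulr1 -inv mulrCA conj_inv mulr1.
Qed.

Definition dft k (u : ncplx R n) : C := \sum_(p < n) (u p)%:C * omega ^+ (k * p).

Lemma dftE k u : dft k u = vk u k +i* vtk u k.
Proof.
apply: complex_ext; rewrite ?complex_Re_sum ?complex_Im_sum; apply: eq_bigr => p _;
  by rewrite omegaX_angle ?complex_ReM ?complex_ImM /=; ring.
Qed.

Lemma dft_polar k u (phi : R) : 0 < rhok u k ->
  cos phi = vk u k / rhok u k -> sin phi = vtk u k / rhok u k ->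
  dft k u = (rhok u k)%:C * expi phi.
Proof.
move=> rho_gt0 cos_phi sin_phi; rewrite dftE /expi cos_phi sin_phi.
by apply: complex_ext => /=; rewrite !(mulr0, mul0r, subr0, addr0) mulrC divfK // gt_eqF.
Qed.

Lemma dft_add k u v : dft k (ncadd u v) = dft k u + dft k v.
Proof. by rewrite -big_split; apply: eq_bigr => p _; rewrite rmorphD mulrDl. Qed.

Lemma dft_scale k a u : dft k (ncscale a u) = a%:C * dft k u.
Proof. by rewrite mulr_sumr; apply: eq_bigr => p _; rewrite rmorphM mulrA. Qed.

Lemma dft_zero k : dft k (@nczero R n) = 0.
Proof. by rewrite /dft big1 // => p _; rewrite mul0r. Qed.

Lemma dft_sum k I (r : seq I) (F : I -> ncplx R n) :
  dft k (ncsum r F) = \sum_(i <- r) dft k (F i).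
Proof.
elim: r => [|i r IH]; first by rewrite big_nil dft_zero.
by rewrite big_cons /= dft_add IH.
Qed.

Lemma dft_one k : dft k (@ncone R n) = 1.
Proof.
rewrite /dft (bigD1 (Ordinal n_gt0)) //= big1 ?addr0.
  by rewrite /ncone /= muln0 mulr1.
move=> p p_neq0; rewrite /ncone; case: eqP => [p_eq0|_]; last by rewrite mul0r.
by move: p_neq0; rewrite (_ : p = Ordinal n_gt0) ?eqxx //; exact: val_inj.
Qed.

Lemma dft_mul k u v : dft k (ncmul u v) = dft k u * dft k v.
Proof.
have omegaXM_mod a b : omega ^+ (k * ((a + b) %% n)) = omega ^+ (k * a) * omega ^+ (k * b).
  by rewrite mulnC exprM omegaX_mod -exprM mulnC mulnDr exprD.
rewrite /dft mulr_suml; under eq_bigr => m _ do rewrite rmorph_sum mulr_suml.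
rewrite exchange_big /=; apply: eq_bigr => j _; rewrite mulr_sumr.
under eq_bigr => m _ do rewrite rmorph_sum mulr_suml.
rewrite (exchange_big_dep xpredT) //=; apply: eq_bigr => l _.
have lt_mod_n : ((j + l) %% n < n)%N by rewrite ltn_pmod.
rewrite (big_pred1 (Ordinal lt_mod_n)) => [|m]; last first.
  by rewrite /= eq_sym; apply/eqP/eqP => [?|->] //; exact: val_inj.
by rewrite /= omegaXM_mod rmorphM; ring.
Qed.

Lemma dft_pow k w j : dft k (ncpow w j) = dft k w ^+ j.
Proof.
elim: j => [|j IH]; first by rewrite dft_one.
by rewrite /ncpow iterS -/(ncpow w j) dft_mul IH exprS.
Qed.

Lemma dft_exp_series k w N :
  dft k (fun p => \sum_(j < N) ncpow w j p / (j`!)%:R) = exp_series (dft k w) N.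
Proof.
rewrite /dft; under eq_bigr do rewrite rmorph_sum mulr_suml.
rewrite exchange_big /=; apply: eq_bigr => j _.
rewrite -dft_pow mulr_suml; apply: eq_bigr => p _.
by rewrite fmorph_div rmorph_nat mulrAC.
Qed.

Lemma dft_inversion u (p : 'I_n) :
  \sum_(k < n) dft k u * omega ^+ (k * (n - p)) = (n%:R * u p)%:C.
Proof.
have orthogonality (q : 'I_n) :
    \sum_(k < n) (u q)%:C * omega ^+ (k * q) * omega ^+ (k * (n - p)) =
    (u q)%:C * (if q == p :> nat then n%:R else 0).
  rewrite -(dvdn_add_subn (ltn_ord q) (ltn_ord p)) -sum_omegaX mulr_sumr.
  by apply: eq_bigr => k _; rewrite -mulrA -exprD -mulnDr mulnC.
rewrite /dft; under eq_bigr do rewrite mulr_suml.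
rewrite exchange_big /=; under eq_bigr do rewrite orthogonality.
rewrite (bigD1 p) //= eqxx big1 ?addr0 => [|q neq_qp]; last by rewrite ifN ?mulr0.
by rewrite rmorphM rmorph_nat mulrC.
Qed.

Lemma dft_inj u v : (forall k, (k < n)%N -> dft k u = dft k v) -> u = v.
Proof.
move=> eq_dft; apply/funext => p; apply: (mulfI n_neq0).
suff /(congr1 (@complex.Re R)) : (n%:R * u p)%:C = (n%:R * v p)%:C :> C by [].
by rewrite -!dft_inversion; apply: eq_bigr => k _; rewrite eq_dft.
Qed.

Lemma dft_subn k u : (k <= n)%N -> dft (n - k) u = (dft k u)^*%C.
Proof.
move=> le_kn; rewrite /dft rmorph_sum; apply: eq_bigr => p _.
rewrite rmorphM; congr (_ * _); first by apply: complex_ext => /=; rewrite ?oppr0.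
by rewrite -conjc_omegaX.
Qed.

Lemma exists_ncexp w : exists E, ncexp_is w E /\ forall k, dft k E = cexp (dft k w).
Proof.
pose S N p := \sum_(j < N) ncpow w j p / (j`!)%:R.
pose E p := complex.Re (\sum_(k < n) cexp (dft k w) * omega ^+ (k * (n - p))) / n%:R.
have S_inversion N (p : 'I_n) : S N p =
    complex.Re (\sum_(k < n) exp_series (dft k w) N * omega ^+ (k * (n - p))) / n%:R.
  under eq_bigr do rewrite -dft_exp_series.
  by rewrite dft_inversion /= mulrC mulKf.
have cvg_S p : (fun N => S N p) @ \oo --> E p.
  under eq_cvg do rewrite S_inversion; apply: cvgMr_tmp.
  apply: (cvgc_sum (fun k => cvgcM (cvgc_exp_series _) (cvgc_cst _))).1.
exists E; split => // k.
apply: (@cvgc_unique _ (fun N => dft k (S N))).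
  by apply: cvgc_sum => p; apply: cvgcM (cvgc_real (cvg_S p)) (cvgc_cst _).
under [fun N => _]funext do rewrite dft_exp_series.
exact: cvgc_exp_series.
Qed.

End DiscreteFourierTransform.

Section CanonicalBase.
Variables (R : realType) (n : nat).
Hypothesis n_gt0 : (0 < n)%N.
Local Notation C := R[i].
Local Notation omega := (omega R n).
Local Notation dft := (dft (R := R) (n := n)).

Lemma sum_omegaX_scaled m :
  \sum_(p < n) ((n%:R : R)^-1)%:C * omega ^+ (m * p) = (n %| m)%N%:R.
Proof.
rewrite -mulr_sumr sum_omegaX //; case: (n %| m)%N; last by rewrite mulr0.
by rewrite fmorphV rmorph_nat mulVf // pnatr_eq0 -lt0n.
Qed.

Lemma dft_eplus k : (k < n)%N -> dft k (@eplus R n) = (k == 0)%N%:R.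
Proof.
move=> lt_kn; rewrite /dft /eplus; under eq_bigr do rewrite div1r.
rewrite sum_omegaX_scaled; congr (_%:R).
by case: k lt_kn => [|k] lt_kn; rewrite ?dvdn0 // gtnNdvd.
Qed.

Lemma omega_half : ~~ odd n -> omega ^+ n./2 = -1.
Proof.
move=> even_n; have double_half : (n./2 * 2 = n)%N.
  by rewrite muln2 -[RHS](odd_double_half n) (negbTE even_n).
have : (omega ^+ n./2) ^+ 2 = 1 by rewrite -exprM double_half omegaXn.
have : omega ^+ n./2 != 1 by apply: omegaX_neq1 => //; apply/andP; split; lia.
by move=> neq1 /eqP; rewrite sqrf_eq1 (negbTE neq1) => /eqP.
Qed.

Lemma dft_eminus k : ~~ odd n -> (k < n)%N -> dft k (@eminus R n) = (k == n./2)%N%:R.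
Proof.
move=> even_n lt_kn.
have half_sub : (n - n./2 = n./2)%N by move: (odd_double_half n); rewrite (negbTE even_n); lia.
rewrite /dft -(dvdn_add_subn lt_kn) ?half_sub -?sum_omegaX_scaled; last lia.
apply: eq_bigr => p _; rewrite /eminus mulnDl exprD (exprM _ n./2) omega_half //.
by rewrite rmorphM rmorphXn rmorphN1; ring.
Qed.

Lemma cos_angle_omegaX l p : (l <= n)%N ->
  (cos (angle R n l p))%:C = (omega ^+ (l * p) + omega ^+ ((n - l) * p)) / 2.
Proof. by move=> le_ln; rewrite -conjc_omegaX // omegaX_angle -ReJ_add. Qed.

Lemma sin_angle_omegaX l p : (l <= n)%N ->
  (sin (angle R n l p))%:C = (omega ^+ ((n - l) * p) - omega ^+ (l * p)) / 2 * 'i.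
Proof. by move=> le_ln; rewrite -conjc_omegaX // omegaX_angle -ImJ_sub. Qed.

Lemma dft_ek k l : (l <= n)%N ->
  dft k (@ek R n l) = (n %| l + k)%N%:R + (n %| k + (n - l))%N%:R.
Proof.
move=> le_ln; rewrite -!sum_omegaX_scaled -big_split; apply: eq_bigr => p _.
rewrite /ek !rmorphM /= cos_angle_omegaX // !mulnDl !exprD rmorph_nat.
have two_neq0 : (2 : C) != 0 by rewrite pnatr_eq0.
by field; rewrite pnatr_eq0 -lt0n.
Qed.

Lemma dft_etk k l : (l <= n)%N ->
  dft k (@etk R n l) = ((n %| k + (n - l))%N%:R - (n %| l + k)%N%:R) * 'i.
Proof.
move=> le_ln; rewrite -!sum_omegaX_scaled -sumrB mulr_suml; apply: eq_bigr => p _.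
rewrite /etk !rmorphM /= sin_angle_omegaX // !mulnDl !exprD rmorph_nat.
have two_neq0 : (2 : C) != 0 by rewrite pnatr_eq0.
by field; rewrite pnatr_eq0 -lt0n.
Qed.

End CanonicalBase.

Lemma big_delta_uniq (K : pzSemiRingType) (I : eqType) (s : seq I) (k : I)
    (F : I -> K) :
  uniq s -> \sum_(i <- s) (k == i)%:R * F i = (k \in s)%:R * F k.
Proof.
elim: s => [|a s IH] /=; first by rewrite big_nil mul0r.
move=> /andP[a_notin_s uniq_s]; rewrite big_cons IH // in_cons.
by have [->|] := eqVneq k a; rewrite ?(negbTE a_notin_s) ?mul1r ?mul0r ?addr0 ?add0r.
Qed.

Lemma half_pred n : (n.-1)./2 = if odd n then n./2 else (n./2).-1.
Proof. by case: n => [|n] //=; rewrite uphalf_half; case: (odd n). Qed.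

Section HalfSpectrum.
Variables (R : realType) (n : nat).
Hypothesis n_ge2 : (2 <= n)%N.
Local Notation C := R[i].
Local Notation dft := (dft (R := R) (n := n)).

Let n_gt0 : (0 < n)%N. Proof. exact: leq_trans n_ge2. Qed.
Let half_lt_n : (n./2 < n)%N. Proof. rewrite ltn_half_double; lia. Qed.

Lemma mem_krange k : (k \in krange n) = (1 <= k <= (n.-1)./2)%N.
Proof. by rewrite /krange mem_iota add1n ltnS. Qed.

Lemma dft_inj_half (x y : ncplx R n) :
  (forall k, (k <= n./2)%N -> dft k x = dft k y) -> x = y.
Proof.
move=> eq_half; apply: (dft_inj n_gt0) => k lt_kn.
have [le_k_half|lt_half_k] := leqP k n./2; first exact: eq_half.
have le_nk_half : (n - k <= n./2)%N by move: (odd_double_half n); case: (odd n) => /=; lia.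
by rewrite -(subKn (ltnW lt_kn)) !(dft_subn n_gt0 _ (leq_subr k n)) (eq_half _ le_nk_half).
Qed.

Variant half_spectrum_spec : nat -> bool -> bool -> bool -> Type :=
  | HalfSpectrumZero : half_spectrum_spec 0 true false false
  | HalfSpectrumMid k of k \in krange n : half_spectrum_spec k false true false
  | HalfSpectrumNyquist of ~~ odd n : half_spectrum_spec n./2 false false true.

Lemma half_spectrumP k : (k <= n./2)%N ->
  half_spectrum_spec k (k == 0)%N (k \in krange n) (~~ odd n && (k == n./2)%N).
Proof.
move=> le_k_half; have n_eq := odd_double_half n.
have half_gt0 : (0 < n./2)%N by case: (odd n) n_eq => /=; lia.
have [->|k_gt0] := posnP k; first by rewrite eq_sym gtn_eqF // andbF mem_krange; constructor.
have k_mid : (k \in krange n) = (k < n./2)%N || odd n.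
  rewrite mem_krange k_gt0 /= half_pred.
  by case: (odd n) n_eq => /= n_eq; [rewrite le_k_half orbT | rewrite orbF]; lia.
rewrite k_mid; case: (boolP (odd n)) => [odd_n|even_n] /=.
  by rewrite orbT; constructor; rewrite k_mid odd_n orbT.
rewrite orbF; have [->|neq_half] := eqVneq k n./2; first by rewrite ltnn; constructor.
by rewrite ltn_neqAle neq_half le_k_half; constructor; rewrite k_mid ltn_neqAle neq_half le_k_half.
Qed.

Lemma dft_eplus_half k : (k <= n./2)%N -> dft k (@eplus R n) = (k == 0)%N%:R.
Proof. by move=> le_k_half; rewrite dft_eplus // (leq_ltn_trans le_k_half). Qed.

Lemma dft_eminus_term k (b : R) : (k <= n./2)%N ->
  dft k (if odd n then @nczero R n else ncscale b (@eminus R n)) =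
  (~~ odd n && (k == n./2)%N)%:R * b%:C.
Proof.
move=> le_k_half; case: (boolP (odd n)) => [_|even_n]; first by rewrite dft_zero mul0r.
by rewrite dft_scale dft_eminus ?(leq_ltn_trans le_k_half) // mulrC.
Qed.

Lemma krange_add_half_lt l k : l \in krange n -> (k <= n./2)%N -> (l + k < n)%N.
Proof.
rewrite mem_krange half_pred => /andP[_]; have := odd_double_half n.
by case: (odd n) => /=; lia.
Qed.

Lemma dft_ek_half l k : l \in krange n -> (k <= n./2)%N -> dft k (@ek R n l) = (k == l)%N%:R.
Proof.
move=> l_mid le_k_half; have lt_lk_n := krange_add_half_lt l_mid le_k_half.
rewrite dft_ek ?dvdn_add_subn; try lia.
by rewrite gtnNdvd ?add0r //; move: l_mid; rewrite mem_krange; lia.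
Qed.

Lemma dft_etk_half l k : l \in krange n -> (k <= n./2)%N ->
  dft k (@etk R n l) = (k == l)%N%:R * 'i.
Proof.
move=> l_mid le_k_half; have lt_lk_n := krange_add_half_lt l_mid le_k_half.
rewrite dft_etk ?dvdn_add_subn; try lia.
by rewrite gtnNdvd ?subr0 //; move: l_mid; rewrite mem_krange; lia.
Qed.

Variables (u : ncplx R n) (phi : nat -> R).

Lemma dft_krange_sum k (F : nat -> ncplx R n) (G : nat -> C) :
  (forall l, l \in krange n -> dft k (F l) = (k == l)%N%:R * G l) ->
  dft k (ncsum (krange n) F) = (k \in krange n)%:R * G k.
Proof. by move=> dftF; rewrite dft_sum (eq_big_seq _ dftF) big_delta_uniq ?iota_uniq. Qed.

Lemma dft_log_exponent k : (k <= n./2)%N ->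
  dft k (log_exponent u phi) =
  (k == 0)%N%:R * (ln (vplus u))%:C + ((~~ odd n && (k == n./2)%N)%:R * (ln (vminus u))%:C
  + (k \in krange n)%:R * ((ln (rhok u k))%:C + (phi k)%:C * 'i)).
Proof.
move=> le_k_half; rewrite !dft_add dft_scale dft_eplus_half // dft_eminus_term // mulrC.
congr (_ + (_ + _)).
apply: (dft_krange_sum (G := fun l => (ln (rhok u l))%:C + (phi l)%:C * 'i)) => l l_mid.
by rewrite dft_add (dft_scale _ (ln _)) (dft_scale _ (phi l)) dft_ek_half // dft_etk_half //; ring.
Qed.

Lemma dft_modulus_part k : (k <= n./2)%N ->
  dft k (modulus_part u) =
  (k == 0)%N%:R * (vplus u)%:C + ((~~ odd n && (k == n./2)%N)%:R * (vminus u)%:C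
  + (k \in krange n)%:R * (rhok u k)%:C).
Proof.
move=> le_k_half; rewrite !dft_add dft_scale dft_eplus_half // dft_eminus_term // mulrC.
congr (_ + (_ + _)).
apply: (dft_krange_sum (G := fun l => (rhok u l)%:C)) => l l_mid.
by rewrite dft_scale dft_ek_half // mulrC.
Qed.

Lemma dft_angle_exponent k : (k <= n./2)%N ->
  dft k (angle_exponent (n := n) phi) = (k \in krange n)%:R * ((phi k)%:C * 'i).
Proof.
move=> le_k_half.
apply: (dft_krange_sum (G := fun l => (phi l)%:C * 'i)) => l l_mid.
by rewrite dft_scale dft_etk_half //; ring.
Qed.

End HalfSpectrum.

Section PolarForm.
Variables (R : realType) (n : nat).
Hypothesis n_ge2 : (2 <= n)%N.
Variables (u : ncplx R n) (phi : nat -> R).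
Hypothesis vplus_gt0 : 0 < vplus u.
Hypothesis vminus_gt0 : ~~ odd n -> 0 < vminus u.
Hypothesis rhok_gt0 : forall k, k \in krange n -> 0 < rhok u k.
Hypothesis phi_polar : forall k, k \in krange n ->
  cos (phi k) = vk u k / rhok u k /\ sin (phi k) = vtk u k / rhok u k.
Local Notation dft := (dft (R := R) (n := n)).

Let n_gt0 : (0 < n)%N. Proof. exact: leq_trans n_ge2. Qed.

Lemma dft0_vplus : dft 0 u = (vplus u)%:C.
Proof. by rewrite /dft rmorph_sum; apply: eq_bigr => p _; rewrite mul0n mulr1. Qed.

Lemma dft_half_vminus : ~~ odd n -> dft n./2 u = (vminus u)%:C.
Proof.
move=> even_n; rewrite /dft rmorph_sum; apply: eq_bigr => p _.
by rewrite exprM omega_half // rmorphM rmorphXn rmorphN1 mulrC.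
Qed.

Lemma dft_krange k : k \in krange n -> dft k u = (rhok u k)%:C * expi (phi k).
Proof. by move=> k_mid; have [] := phi_polar k_mid; apply: dft_polar; exact: rhok_gt0. Qed.

Lemma ncexp_log_exponent : ncexp_is (log_exponent u phi) u.
Proof.
have [E [expE dftE]] := exists_ncexp n_gt0 (log_exponent u phi).
suff E_eq : E = u by move: expE; rewrite E_eq.
apply: (dft_inj_half n_ge2) => k le_k_half; rewrite dftE dft_log_exponent //.
case: half_spectrumP => // [|l l_mid|even_n]; rewrite !(mul0r, mul1r, add0r, addr0).
- by rewrite cexp_real lnK ?dft0_vplus.
- by rewrite cexp_polar lnK ?posrE ?rhok_gt0 ?dft_krange.
- by rewrite cexp_real lnK ?posrE ?vminus_gt0 ?dft_half_vminus.
Qed.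

Lemma ncexp_polar_decomposition :
  exists E, ncexp_is (angle_exponent (n := n) phi) E /\ u = ncmul (modulus_part u) E.
Proof.
have [E [expE dftE]] := exists_ncexp n_gt0 (angle_exponent (n := n) phi).
exists E; split => //; apply: (dft_inj_half n_ge2) => k le_k_half.
rewrite dft_mul // dftE dft_modulus_part // dft_angle_exponent //.
case: half_spectrumP => // [|l l_mid|even_n]; rewrite !(mul0r, mul1r, add0r, addr0).
- by rewrite cexp0 mulr1 dft0_vplus.
- by rewrite cexp_i dft_krange.
- by rewrite cexp0 mulr1 dft_half_vminus.
Qed.

End PolarForm.

Unset Implicit Arguments.

Theorem mainTheorem9 (R : realType) (n : nat) (hn : (2 <= n)%N)
  (u : ncplx R n) (phi : nat -> R)
  (hvp : 0 < vplus u)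
  (hvm : ~~ odd n -> 0 < vminus u)
  (hrho : forall k, (1 <= k <= (n.-1)./2)%N -> 0 < rhok u k)
  (hphi : forall k, (1 <= k <= (n.-1)./2)%N ->
     [/\ 0 <= phi k, phi k < 2 * pi,
         cos (phi k) = vk u k / rhok u k & sin (phi k) = vtk u k / rhok u k]) :
  ncexp_is (log_exponent u phi) u /\
  exists E, ncexp_is (angle_exponent (n:=n) phi) E /\ u = ncmul (modulus_part u) E.
Proof.
(* The normalisation 0 <= phi k < 2 pi only makes phi k unique. *)
have rhok_gt0 k : k \in krange n -> 0 < rhok u k by rewrite mem_krange; exact: hrho.
have phi_polar k : k \in krange n ->
    cos (phi k) = vk u k / rhok u k /\ sin (phi k) = vtk u k / rhok u k.
  by rewrite mem_krange => /hphi[].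
split; first exact: ncexp_log_exponent.
exact: ncexp_polar_decomposition.
Qed.
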